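(* Let $(G,u,v,\alpha,\beta)$ be a Guvab with $\beta<1$ and $\lim_{k\to\infty}W_k=\frac12$, and let $\xi_k=\mu_k-\nu_k$. Then there exists $N$ such that for every $k\ge N$, either $$\frac12\sum_{w\in V(G)}|\xi_k(w)|=0.5+0.5(1-2\beta)^k\quad\text{or}\quad\frac12\sum_{w\in V(G)}|\xi_k(w)|=0.5-0.5(1-2\beta)^k.$$
   Context: A Guvab is a tuple $(G,u,v,\alpha,\beta)$ where $G$ is a finite, connected, simple graph, $u,v\in V(G)$, and $\alpha,\beta\in[0,1]$ with $\alpha\le\beta$. A random walk on $G$ with starting vertex $w$ and laziness $\gamma$ is the Markov chain $R_0=w$ and, for $i\ge1$, $R_i=R_{i-1}$ with probability $\gamma$ and $R_i=t$ with probability $\frac{1-\gamma}{\deg(R_{i-1})}$ for each neighbor $t$ of $R_{i-1}$. $\mu_k$ is the distribution after $k$ steps of the walk from $u$ with laziness $\alpha$, $\nu_k$ that of the walk from $v$ with laziness $\beta$, and $W_k=W(\mu_k,\nu_k)$ is the Wasserstein ($L^1$ optimal transport) distance with respect to the graph distance: the minimum over transportation plans (nonnegative $T$ on $V(G)\times V(G)$ with marginals $\mu_k,\nu_k$) of $\sum d(w_1,w_2)T(w_1,w_2)$. *)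

From HB Require Import structures.
From mathcomp Require Import all_boot all_order all_algebra.
From mathcomp Require Import all_classical all_reals all_analysis.
Set Implicit Arguments. Unset Strict Implicit. Unset Printing Implicit Defensive.
Import Order.TTheory GRing.Theory Num.Theory.
Import numFieldNormedType.Exports.
Local Open Scope ring_scope.
Local Open Scope classical_set_scope.

Section Guvab.
Variables (R : realType) (V : finType) (e : rel V).

Definition simple_connected_graph : Prop :=
  symmetric e /\ irreflexive e /\ (forall x y : V, connect e x y).

Definition walk_of_len (x y : V) (n : nat) : bool :=
  [exists p : n.-tuple V, path e x p && (last x p == y)].

(* graph distance: length of a shortest walk (= shortest path);
   for a connected graph such a walk of length < #|V| always exists. *)
Definition gdist (x y : V) : nat := find (walk_of_len x y) (iota 0 #|V|).

Definition deg (x : V) : nat := #|[set y | e x y]|.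

Definition trans (gamma : R) (x y : V) : R :=
  if x == y then gamma
  else if e x y then (1 - gamma) / (deg x)%:R else 0.

Fixpoint walk_dist (gamma : R) (w : V) (k : nat) : V -> R :=
  match k with
  | 0 => fun y => if y == w then 1 else 0
  | k'.+1 => fun y => \sum_(x : V) walk_dist gamma w k' x * trans gamma x y
  end.

Definition transport_plan (mu nu : V -> R) (T : V -> V -> R) : Prop :=
  (forall a b, 0 <= T a b) /\
  (forall a, \sum_(b : V) T a b = mu a) /\
  (forall b, \sum_(a : V) T a b = nu b).

Definition plan_cost (T : V -> V -> R) : R :=
  \sum_(a : V) \sum_(b : V) (gdist a b)%:R * T a b.

(* L^1 Wasserstein distance w.r.t. graph distance (the minimum is attained,
   so it equals the infimum) *)
Definition wasserstein (mu nu : V -> R) : R :=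
  inf [set c | exists T, transport_plan mu nu T /\ c = plan_cost T].

End Guvab.

(* By Doeblin's argument, a walk that is lazy, or non-lazy on a non-bipartite graph,
   converges to the stationary distribution [deg x / sum_y deg y]; on a bipartite graph the
   non-lazy walk is asymptotically twice the stationary distribution on the side it occupies
   at time k, and zero on the other side.  Whenever the two walks have the same asymptotics,
   mu_k - nu_k -> 0, so W_k <= |V| * ||mu_k - nu_k||_1 -> 0, contradicting W_k -> 1/2.
   What remains is alpha = 0 on a bipartite graph with nu_k <= mu_k on the support of mu_k
   for large k.  There ||mu_k - nu_k||_1 = 1 - sum_x sigma_k(x) nu_k(x), where sigma_k = +-1
   according to the side of x, and this signed sum is +-(1 - 2 beta)^k because the +-1
   indicator of a bipartition is an eigenvector of the lazy transition matrix with
   eigenvalue 2 beta - 1. *)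

From HB Require Import structures.
From mathcomp Require Import all_boot all_order all_algebra.
From mathcomp Require Import all_classical all_reals all_analysis.
From mathcomp Require Import ring lra.
Import Order.TTheory GRing.Theory Num.Theory.
Import numFieldNormedType.Exports.
Local Open Scope ring_scope.
Local Open Scope classical_set_scope.

Set Implicit Arguments. Unset Strict Implicit. Unset Printing Implicit Defensive.

Lemma connected_deg_gt0 (V : finType) (e : rel V) (a b : V) :
  (forall x y, connect e x y) -> a != b -> forall x, (0 < deg e x)%N.
Proof.
move=> conn ab x.
have [y yx] : exists y, y != x.
  by case: (eqVneq a x) => [<-|]; [exists b; rewrite eq_sym | exists a].
have /connectP[[|z p] /=] := conn x y; first by move=> _ eq_yx; rewrite eq_yx eqxx in yx.
by case/andP => exz _ _; apply/card_gt0P; exists z; rewrite inE.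
Qed.

(** * Transport cost *)

Section Wasserstein.
Variables (R : realType) (V : finType) (e : rel V).

Lemma gdist_refl x : gdist e x x = 0%N.
Proof.
rewrite /gdist; have : (0 < #|V|)%N by apply/card_gt0P; exists x.
case: #|V| => // n _ /=; rewrite /walk_of_len.
suff -> : [exists p : 0.-tuple V, path e x p && (last x p == x)] by [].
by apply/existsP; exists [tuple]; rewrite /= eqxx.
Qed.

Lemma gdist_le_card x y : (gdist e x y <= #|V|)%N.
Proof. by rewrite /gdist (leq_trans (find_size _ _)) ?size_iota. Qed.

Lemma plan_cost_ge0 (T : V -> V -> R) : (forall a b, 0 <= T a b) -> 0 <= plan_cost e T.
Proof. by move=> T_ge0; do 2!apply: sumr_ge0 => ? _; rewrite mulr_ge0. Qed.

Lemma wasserstein_le_cost (mu nu : V -> R) T : transport_plan mu nu T ->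
  wasserstein e mu nu <= plan_cost e T.
Proof.
move=> plan; apply: ge_inf; last by exists T.
by exists 0 => _ [T' [[T'_ge0 _] ->]]; apply: plan_cost_ge0.
Qed.

Lemma wasserstein_no_plan (mu nu : V -> R) :
  ~ (exists T, transport_plan mu nu T) -> wasserstein e mu nu = 0.
Proof.
move=> no_plan; rewrite /wasserstein (_ : [set _ | _] = set0) ?inf0 //.
by apply/seteqP; split => // c [T [plan _]]; apply: no_plan; exists T.
Qed.

Lemma wasserstein_ge0 (mu nu : V -> R) : 0 <= wasserstein e mu nu.
Proof.
have [[T plan]|/wasserstein_no_plan->//] := pselect (exists T, transport_plan mu nu T).
apply: lb_le_inf; first by exists (plan_cost e T), T.
by move=> _ [T' [[T'_ge0 _] ->]]; apply: plan_cost_ge0.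
Qed.

Lemma wasserstein_subsingleton (mu nu : V -> R) :
  (forall a b : V, a = b) -> wasserstein e mu nu = 0.
Proof.
move=> single; apply/eqP; rewrite eq_le wasserstein_ge0 andbT.
have [[T plan]|/wasserstein_no_plan->//] := pselect (exists T, transport_plan mu nu T).
apply: le_trans (wasserstein_le_cost plan) _.
by rewrite /plan_cost big1 // => a _; rewrite big1 // => b _; rewrite (single b a) gdist_refl mul0r.
Qed.

Section L1Bound.
Variables (mu nu : V -> R).
Hypotheses (mu_ge0 : forall a, 0 <= mu a) (nu_ge0 : forall a, 0 <= nu a).
Hypothesis sum_mu_nu : \sum_a mu a = \sum_a nu a.

(* The plan keeps the common mass [min (mu a) (nu a)] in place and spreads the surplus of
   [mu] proportionally over the deficit. *)
Let common a := if mu a <= nu a then mu a else nu a.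
Let surplus a := if mu a <= nu a then 0 else mu a - nu a.
Let deficit a := if mu a <= nu a then nu a - mu a else 0.
Let m := \sum_a surplus a.

Let surplus_ge0 a : 0 <= surplus a.
Proof. by rewrite /surplus; case: (leP (mu a) (nu a)) => //; rewrite subr_ge0 => /ltW. Qed.
Let deficit_ge0 a : 0 <= deficit a.
Proof. by rewrite /deficit; case: (leP (mu a) (nu a)); rewrite ?subr_ge0. Qed.
Let commonD_surplus a : common a + surplus a = mu a.
Proof.
by rewrite /common /surplus; case: (leP (mu a) (nu a)) => _; rewrite ?addr0 // addrC subrK.
Qed.
Let commonD_deficit a : common a + deficit a = nu a.
Proof.
by rewrite /common /deficit; case: (leP (mu a) (nu a)) => _; rewrite ?addr0 // addrC subrK.
Qed.

Let sum_deficit : \sum_a deficit a = m.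
Proof.
apply: (@addrI _ (\sum_a common a)); rewrite -!big_split /=.
by under eq_bigr do rewrite commonD_deficit; under [RHS]eq_bigr do rewrite commonD_surplus.
Qed.

Let surplus_eq0 a : m = 0 -> surplus a = 0.
Proof.
move=> m0; apply/eqP; rewrite eq_le surplus_ge0 andbT -m0.
by rewrite /m (bigD1 a) //= lerDl sumr_ge0.
Qed.
Let deficit_eq0 b : m = 0 -> deficit b = 0.
Proof.
move=> m0; apply/eqP; rewrite eq_le deficit_ge0 andbT -m0.
by rewrite -sum_deficit (bigD1 b) //= lerDl sumr_ge0.
Qed.

Let plan a b := (if a == b then common a else 0) + surplus a * deficit b / m.

Let plan_transport : transport_plan mu nu plan.
Proof.
split; [|split] => [a b|a|b].
- rewrite addr_ge0 ?divr_ge0 ?mulr_ge0 ?sumr_ge0 //.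
  by case: eqP => // _; rewrite /common; case: ifP.
- rewrite big_split /= (bigD1 a) //= eqxx big1 ?addr0 => [|b /negbTE]; last by rewrite eq_sym => ->.
  rewrite -big_distrl -big_distrr /= sum_deficit -commonD_surplus; congr (_ + _).
  have [m0|m_neq0] := eqVneq m 0; last by rewrite mulfK.
  by rewrite surplus_eq0 // !mul0r.
- rewrite big_split /= (bigD1 b) //= eqxx big1 ?addr0 => [|a /negbTE ->] //.
  under eq_bigr do rewrite mulrAC.
  rewrite -!big_distrl /= -commonD_deficit; congr (_ + _).
  have [m0|m_neq0] := eqVneq m 0; last by rewrite -/m divff ?mul1r.
  by rewrite deficit_eq0 // mulr0.
Qed.

Lemma wasserstein_le_l1 : wasserstein e mu nu <= #|V|%:R * \sum_a `|mu a - nu a|.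
Proof.
apply: le_trans (wasserstein_le_cost plan_transport) _.
have m_le : m <= \sum_a `|mu a - nu a|.
  by apply: ler_sum => a _; rewrite /surplus; case: (leP (mu a) (nu a)) => // _; apply: ler_norm.
apply: le_trans (_ : #|V|%:R * m <= _); last by rewrite ler_wpM2l.
have row a : \sum_b #|V|%:R * (surplus a * deficit b / m) = #|V|%:R * surplus a.
  rewrite -big_distrr /=; congr (_ * _); under eq_bigr do rewrite mulrAC.
  rewrite -big_distrr /= sum_deficit; have [m0|m_neq0] := eqVneq m 0; last by rewrite divfK.
  by rewrite surplus_eq0 // !mul0r.
rewrite /m big_distrr /=; apply: ler_sum => a _; rewrite -row; apply: ler_sum => b _.
rewrite /plan; case: (eqVneq a b) => [<-|_].
  by rewrite gdist_refl mul0r mulr_ge0 ?divr_ge0 ?mulr_ge0 ?ler0n ?sumr_ge0.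
by rewrite add0r ler_wpM2r ?divr_ge0 ?mulr_ge0 ?sumr_ge0 // ler_nat gdist_le_card.
Qed.

End L1Bound.

Lemma wasserstein_cvg0 (mu nu : nat -> V -> R) :
  (forall k a, 0 <= mu k a) -> (forall k a, 0 <= nu k a) ->
  (forall k, \sum_a mu k a = \sum_a nu k a) ->
  (forall a, mu k a - nu k a @[k --> \oo] --> 0) ->
  wasserstein e (mu k) (nu k) @[k --> \oo] --> 0.
Proof.
move=> mu_ge0 nu_ge0 sum_eq mu_nu_cvg.
apply: (@squeeze_cvgr _ _ _ _ (cst 0) (fun k => #|V|%:R * \sum_a `|mu k a - nu k a|)).
- by apply: nearW => k; rewrite wasserstein_ge0 wasserstein_le_l1.
- exact: cvg_cst.
have sum0 : \sum_(a : V) `|0 : R| = 0 by rewrite big1 // => a _; rewrite normr0.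
have lim0 : \sum_a `|mu k a - nu k a| @[k --> \oo] --> 0.
  rewrite -[X in _ --> X]sum0; apply: cvg_big => [|a _]; last exact: cvg_norm.
  exact: pseudometric_normed_Zmodule.add_continuous.
by rewrite -[X in _ --> X](mulr0 #|V|%:R); apply: cvgMr.
Qed.

End Wasserstein.

(** * Random walks *)

Lemma weighted_mean_close (R : realType) (I : finType) (c : pred I) (mu F : I -> R) a eps :
  (forall i, 0 <= mu i) -> 0 < \sum_(i | c i) mu i ->
  (forall i, c i -> a <= F i <= a + eps) ->
  forall i, c i -> `|F i - (\sum_(j | c j) mu j * F j) / \sum_(j | c j) mu j| <= eps.
Proof.
move=> mu_ge0 D_gt0 F_in i ci.
have lo : a <= (\sum_(j | c j) mu j * F j) / \sum_(j | c j) mu j.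
  rewrite ler_pdivlMr // big_distrr /=; apply: ler_sum => j /F_in /andP[Fj _].
  by rewrite mulrC ler_wpM2l.
have hi : (\sum_(j | c j) mu j * F j) / \sum_(j | c j) mu j <= a + eps.
  rewrite ler_pdivrMr // big_distrr /=; apply: ler_sum => j /F_in /andP[_ Fj].
  by rewrite [_ * mu j]mulrC ler_wpM2l.
by have /andP[? ?] := F_in i ci; rewrite ler_norml; apply/andP; split; lra.
Qed.

Section WalkDist.
Variables (R : realType) (V : finType) (e : rel V).
Hypothesis esym : symmetric e.
Hypothesis eirr : irreflexive e.
Hypothesis deg_gt0 : forall x, (0 < deg e x)%N.
Variable g : R.
Hypotheses (g_ge0 : 0 <= g) (g_le1 : g <= 1).

Local Notation P k x y := (walk_dist e g x k y).

Lemma natr_deg x : (deg e x)%:R = \sum_y (if e x y then 1 else 0) :> R.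
Proof.
rewrite /deg -big_mkcond /= -sum1_card natr_sum.
by apply: eq_bigl => y; rewrite unfold_in /= asboolb.
Qed.

Lemma natr_deg_neq0 x : (deg e x)%:R != 0 :> R.
Proof. by rewrite pnatr_eq0 -lt0n deg_gt0. Qed.

Lemma trans_ge0 x y : 0 <= trans e g x y.
Proof.
rewrite /trans; case: eqP => // _; case: (e x y) => //.
by rewrite divr_ge0 // subr_ge0.
Qed.

Lemma transE x y : trans e g x y =
  (if y == x then g else 0) + (if e x y then (1 - g) / (deg e x)%:R else 0).
Proof.
rewrite /trans eq_sym; case: eqP => [->|_]; last by rewrite add0r.
by rewrite eirr addr0.
Qed.

Lemma sum_trans x : \sum_y trans e g x y = 1.
Proof.
under eq_bigr do rewrite transE.
rewrite big_split /= -big_mkcond /= big_pred1_eq.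
rewrite (eq_bigr (fun y => (1 - g) / (deg e x)%:R * (if e x y then 1 else 0))).
  by rewrite -big_distrr /= -natr_deg divfK ?natr_deg_neq0 // addrC subrK.
by move=> y _; case: (e x y); rewrite ?mulr1 ?mulr0.
Qed.

Lemma deg_trans_sym x y :
  (deg e x)%:R * trans e g x y = (deg e y)%:R * trans e g y x.
Proof.
rewrite /trans eq_sym; case: eqP => [->//|_]; rewrite esym.
case: (e y x); last by rewrite !mulr0.
by rewrite mulrCA divff ?natr_deg_neq0 // mulr1 mulrCA divff ?natr_deg_neq0 // mulr1.
Qed.

Lemma walk_dist_ge0 k x y : 0 <= P k x y.
Proof.
elim: k y => [|k IH] y /=; first by case: eqP.
by apply: sumr_ge0 => z _; rewrite mulr_ge0 ?trans_ge0.
Qed.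

Lemma sum_walk_dist k x : \sum_y P k x y = 1.
Proof.
elim: k => [|k IH] /=.
  by rewrite (bigD1 x) //= eqxx big1 ?addr0 // => y /negbTE ->.
rewrite exchange_big /= -[RHS]IH; apply: eq_bigr => z _.
by rewrite -big_distrr /= sum_trans mulr1.
Qed.

Lemma walk_dist_le1 k x y : P k x y <= 1.
Proof.
rewrite -(sum_walk_dist k x) (bigD1 y) //= lerDl.
by apply: sumr_ge0 => z _; apply: walk_dist_ge0.
Qed.

Lemma walk_distD k l x y : P (k + l) x y = \sum_z P k x z * P l z y.
Proof.
elim: l y => [|l IH] y.
  rewrite addn0 (bigD1 y) //= eqxx mulr1 big1 ?addr0 // => z /negbTE.
  by rewrite eq_sym => ->; rewrite mulr0.
rewrite addnS /=.
under eq_bigr do rewrite IH big_distrl /=.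
rewrite exchange_big /=; apply: eq_bigr => w _.
by rewrite big_distrr /=; apply: eq_bigr => z _; rewrite mulrA.
Qed.

Lemma walk_dist1 x y : P 1 x y = trans e g x y.
Proof.
rewrite /= (bigD1 x) //= eqxx mul1r big1 ?addr0 // => z /negbTE ->.
by rewrite mul0r.
Qed.

Lemma walk_distSl k x y : P k.+1 x y = \sum_z trans e g x z * P k z y.
Proof. by rewrite -add1n walk_distD; apply: eq_bigr => z _; rewrite walk_dist1. Qed.

Lemma deg_walk_dist_sym k x y : (deg e x)%:R * P k x y = (deg e y)%:R * P k y x.
Proof.
elim: k x y => [|k IH] x y.
  by rewrite /=; case: (eqVneq y x) => [->|_]; rewrite ?mulr0.
rewrite walk_distSl !big_distrr /=; apply: eq_bigr => z _.
by rewrite mulrA deg_trans_sym -mulrA mulrCA IH mulrCA [trans _ _ _ _ * _]mulrC.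
Qed.

Lemma walk_dist_ge_mul k l x y z : P k x y * P l y z <= P (k + l) x z.
Proof.
rewrite walk_distD (bigD1 y) //= lerDl.
by apply: sumr_ge0 => w _; rewrite mulr_ge0 ?walk_dist_ge0.
Qed.

Lemma walk_dist_gt0_trans k l x y z :
  0 < P k x y -> 0 < P l y z -> 0 < P (k + l) x z.
Proof. by move=> ? ?; apply: lt_le_trans (walk_dist_ge_mul k l x y z); rewrite mulr_gt0. Qed.

Lemma walk_dist_gt0_iter j i y : 0 < P j y y -> 0 < P (j * i) y y.
Proof.
move=> Pj; elim: i => [|i IH]; first by rewrite muln0 /= eqxx ltr01.
by rewrite mulnSr; exact: walk_dist_gt0_trans IH Pj.
Qed.

Lemma walk_dist_gt0_eventually j l x y : (j %| l)%N ->
  0 < P l x y -> 0 < P j y y -> \forall m \near \oo, 0 < P (j * m) x y.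
Proof.
move=> /dvdnP[i ->] Pl Pj; near=> m.
rewrite -(subnKC (_ : i <= m)%N); last by near: m; exists i.
by rewrite mulnDr mulnC; apply: walk_dist_gt0_trans Pl (walk_dist_gt0_iter _ Pj).
Unshelve. all: by end_near. Qed.

Section Doeblin.
Variables (c : pred V) (T : nat) (y0 w : V) (d : R).
Hypotheses (T_gt0 : (0 < T)%N) (c_y0 : c y0) (d_gt0 : 0 < d).
Hypothesis minorization : forall x, c x -> d <= P T x y0.
Hypothesis c_closed : forall x y, c x -> ~~ c y -> P T x y = 0.

Lemma minorization_le1 : d <= 1.
Proof. exact: le_trans (minorization c_y0) (walk_dist_le1 _ _ _). Qed.

Lemma sum_walk_dist_ge (F : V -> R) x : c x -> (forall y, c y -> 0 <= F y) ->
  d * F y0 <= \sum_y P T x y * F y.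
Proof.
move=> cx F_ge0; apply: le_trans (_ : P T x y0 * F y0 <= _).
  by rewrite ler_wpM2r ?F_ge0 ?minorization.
rewrite (bigD1 y0) //= lerDl; apply: sumr_ge0 => y _.
case: (boolP (c y)) => [/F_ge0 F_y|/(c_closed cx) ->]; last by rewrite mul0r.
by rewrite mulr_ge0 ?walk_dist_ge0.
Qed.

Lemma doeblin_contraction k a eps :
  (forall x, c x -> a <= P k x w <= a + eps) ->
  exists a', forall x, c x -> a' <= P (T + k) x w <= a' + (1 - d) * eps.
Proof.
move=> Pk_in; exists (d * P k y0 w + (1 - d) * a) => x cx.
have /andP[lo_y0 hi_y0] := Pk_in _ c_y0.
have mass b : \sum_y P T x y * (b - P k y w) = b - P (T + k) x w.
  under eq_bigr do rewrite mulrBr.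
  by rewrite sumrB -big_distrl /= sum_walk_dist mul1r walk_distD.
have lo := sum_walk_dist_ge (F := fun y => P k y w - a) cx.
have hi := sum_walk_dist_ge (F := fun y => a + eps - P k y w) cx.
have {}lo : d * (P k y0 w - a) <= P (T + k) x w - a.
  apply: le_trans (lo _) _; first by move=> y /Pk_in /andP[]; rewrite subr_ge0.
  rewrite -[leRHS]opprB -mass -sumrN.
  by rewrite le_eqVlt; apply/orP; left; apply/eqP/eq_bigr => y _; rewrite -mulrN opprB.
have {}hi : d * (a + eps - P k y0 w) <= a + eps - P (T + k) x w.
  by rewrite -mass; apply: hi => y /Pk_in /andP[_]; rewrite subr_ge0.
apply/andP; split; nra.
Qed.

Lemma doeblin_iter j k : exists a, forall x, c x ->
  a <= P (j * T + k) x w <= a + (1 - d) ^+ j.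
Proof.
elim: j => [|j [a IH]].
  by exists 0 => x _; rewrite add0r walk_dist_ge0 walk_dist_le1.
have [a' Pk] := doeblin_contraction IH.
by exists a' => x /Pk; rewrite mulSn -addnA exprS mulrC.
Qed.

Lemma doeblin_oscillation eps : 0 < eps -> \forall k \near \oo,
  exists a, forall x, c x -> a <= P k x w <= a + eps.
Proof.
move=> eps_gt0.
have d_le1 := minorization_le1.
have : `|1 - d| < 1 by rewrite ger0_norm ?subr_ge0 // ltrBlDr ltrDl.
move=> /cvg_expr /cvgrPdist_le /(_ eps eps_gt0) [N _ HN].
exists (N * T)%N => // k /= hk.
have [a Pk] := doeblin_iter (k %/ T) (k %% T).
exists a => x /Pk; rewrite -divn_eq => /andP[-> /le_trans]; apply.
rewrite lerD2l; have := @HN (k %/ T)%N; rewrite /= sub0r normrN leq_divRL //.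
by move=> /(_ hk) /(le_trans (ler_norm _)).
Qed.

End Doeblin.

(* Reversibility turns the almost constant column [P k _ w] into a row proportional to [deg]. *)
Lemma walk_dist_row_close (c : pred V) k w a eps :
  0 < \sum_(y | c y) (deg e y)%:R :> R ->
  (forall x, c x -> a <= P k x w <= a + eps) -> \sum_(x | c x) P k w x = 1 ->
  forall x, c x -> `|P k w x - (deg e x)%:R / \sum_(y | c y) (deg e y)%:R| <= #|V|%:R * eps.
Proof.
move=> D_gt0 Pk_in mass_c x cx.
have mean : \sum_(y | c y) (deg e y)%:R * P k y w = (deg e w)%:R.
  rewrite -[RHS]mulr1 -[X in _ * X]mass_c big_distrr /=.
  by apply: eq_bigr => y _; rewrite deg_walk_dist_sym.
have := weighted_mean_close (fun y => ler0n _ (deg e y)) D_gt0 Pk_in cx.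
rewrite mean.
have -> : P k w x = (deg e x)%:R / (deg e w)%:R * P k x w.
  by rewrite mulrAC deg_walk_dist_sym mulrAC divff ?mul1r ?natr_deg_neq0.
have -> : (deg e x)%:R / (deg e w)%:R * P k x w - (deg e x)%:R / \sum_(y | c y) (deg e y)%:R =
  (deg e x)%:R / (deg e w)%:R * (P k x w - (deg e w)%:R / \sum_(y | c y) (deg e y)%:R).
  by field; rewrite natr_deg_neq0 gt_eqF.
have deg_le : (deg e x)%:R / (deg e w)%:R <= #|V|%:R :> R.
  rewrite ler_pdivrMr ?ltr0n ?deg_gt0 // -[leLHS]mulr1.
  by rewrite ler_pM ?ler1n ?deg_gt0 // ler_nat max_card.
by move=> close; rewrite normrM ger0_norm ?divr_ge0 // ler_pM ?divr_ge0.
Qed.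

Lemma walk_dist_cvg_class (c : pred V) (q : nat) (y0 : V) :
  (0 < q)%N -> c y0 -> 0 < P q y0 y0 ->
  (forall x, c x -> exists2 l, (q %| l)%N & 0 < P l x y0) ->
  (forall m x y, c x -> ~~ c y -> P (q * m) x y = 0) ->
  forall w eps, 0 < eps -> \forall k \near \oo,
    \sum_(x | c x) P k w x = 1 ->
    forall x, c x -> `|P k w x - (deg e x)%:R / \sum_(y | c y) (deg e y)%:R| <= eps.
Proof.
move=> q_gt0 c_y0 Pq_y0 c_reach c_closed w eps eps_gt0.
have : \forall m \near \oo, forall x, c x -> 0 < P (q * m) x y0.
  apply: filter_forall => x; case: (boolP (c x)) => [/c_reach[l q_l Pl]|_].
    by apply: filterS (walk_dist_gt0_eventually q_l Pl Pq_y0) => m ? _.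
  exact: nearW.
case=> n _ /(_ n.+1 (leqnSn n)) /= PT_gt0.
pose d := \big[Num.min/1]_(x | c x) P (q * n.+1) x y0.
have d_gt0 : 0 < d by apply: lt_bigmin.
have d_le x : c x -> d <= P (q * n.+1) x y0 by move=> cx; apply: bigmin_le_cond.
have T_gt0 : (0 < q * n.+1)%N by rewrite muln_gt0 q_gt0.
have card_gt0 : 0 < #|V|%:R :> R by rewrite ltr0n; apply/card_gt0P; exists w.
have eps'_gt0 : 0 < eps / #|V|%:R by rewrite divr_gt0.
have [N _ osc] := doeblin_oscillation w T_gt0 c_y0 d_gt0 d_le (c_closed n.+1) eps'_gt0.
exists N => // k /osc [a Pk_in] mass_c.
have D_gt0 : 0 < \sum_(y | c y) (deg e y)%:R :> R.
  by rewrite (bigD1 y0) //= ltr_pwDl ?ltr0n ?sumr_ge0.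
move=> x cx; apply: le_trans (walk_dist_row_close D_gt0 Pk_in mass_c cx) _.
by rewrite mulrC divfK ?lt0r_neq0.
Qed.

Hypothesis g_lt1 : g < 1.

Lemma trans_gt0 x y : e x y -> 0 < trans e g x y.
Proof.
move=> exy; rewrite /trans; case: eqP => [xy|_]; first by rewrite xy eirr in exy.
by rewrite exy divr_gt0 ?ltr0n ?deg_gt0 // subr_gt0.
Qed.

Lemma walk_dist_gt0_path s x : path e x s -> 0 < P (size s) x (last x s).
Proof.
elim: s x => [|z s IH] x; first by rewrite /= eqxx ltr01.
case/andP => exz /IH Ps; rewrite -[size _]add1n.
by apply: walk_dist_gt0_trans Ps; rewrite walk_dist1 trans_gt0.
Qed.

Lemma walk_dist_gt0_connect x y : connect e x y -> exists l, 0 < P l x y.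
Proof. by move=> /connectP [s /walk_dist_gt0_path + ->]; exists (size s). Qed.

Lemma walk_dist2_gt0 y : 0 < P 2 y y.
Proof.
have /card_gt0P [z] : (0 < #|[set z | e y z]|)%N by exact: deg_gt0.
rewrite inE => eyz.
by apply: (@walk_dist_gt0_trans 1 1 y z); rewrite walk_dist1 trans_gt0 // esym.
Qed.

End WalkDist.

Section ConnectedGraph.
Variables (R : realType) (V : finType) (e : rel V).
Hypotheses (esym : symmetric e) (eirr : irreflexive e).
Hypothesis deg_gt0 : forall x, (0 < deg e x)%N.
Hypothesis conn : forall x y, connect e x y.

Local Notation P0 k x y := (walk_dist e (0 : R) x k y).

Definition stationary (x : V) : R := (deg e x)%:R / \sum_y (deg e y)%:R.

Definition even_connected : Prop :=
  forall x y : V, exists2 l, ~~ odd l & 0 < P0 l x y.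

Definition bipartition (s : V -> bool) : Prop := forall x y, e x y -> s y = ~~ s x.

Lemma sum_deg_gt0 (x : V) : 0 < \sum_y (deg e y)%:R :> R.
Proof. by rewrite (bigD1 x) //= ltr_pwDl ?ltr0n ?sumr_ge0. Qed.

Lemma stationary_gt0 x : 0 < stationary x.
Proof. by rewrite divr_gt0 ?ltr0n ?sum_deg_gt0. Qed.

Lemma walk_dist_cvg_stationary g w x : 0 <= g -> g < 1 -> 0 < g \/ even_connected ->
  walk_dist e g w k x @[k --> \oo] --> stationary x.
Proof.
move=> g_ge0 g_lt1 lazy_or_even; have g_le1 := ltW g_lt1.
apply/cvgrPdistC_le => eps eps_gt0.
suff : \forall k \near \oo, \sum_(y | predT y) walk_dist e g w k y = 1 ->
    forall x, predT x -> `|walk_dist e g w k x - stationary x| <= eps.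
  by apply: filterS => k /(_ (sum_walk_dist eirr deg_gt0 g k w)); apply.
have [g_gt0|g_le0] := ltrP 0 g.
  apply: (walk_dist_cvg_class esym eirr deg_gt0 g_ge0 g_le1 (q := 1) (y0 := w)) => //.
    by rewrite walk_dist1 /trans eqxx.
  move=> x' _; have [l Pl] := walk_dist_gt0_connect eirr deg_gt0 g_ge0 g_le1 g_lt1 (conn x' w).
  by exists l; rewrite ?dvd1n.
have g0 : g = 0 by apply/eqP; rewrite eq_le g_le0 g_ge0.
have even : even_connected by move: lazy_or_even; rewrite g0 ltxx => -[].
rewrite g0; apply: (walk_dist_cvg_class esym eirr deg_gt0 (lexx 0) ler01 (q := 2) (y0 := w)) => //.
  exact: walk_dist2_gt0.
move=> x' _; have [l l_even Pl] := even x' w.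
by exists l; rewrite // dvdn2.
Qed.

(* If [z0] has no even walk from [x0], no vertex can have walks of both parities from [x0];
   the parity of the walks from [x0] is then a bipartition. *)
Lemma even_connected_or_bipartition : even_connected \/ exists s, bipartition s.
Proof.
have [|/existsNP[x0 /existsNP[z0 no_even]]] := pselect even_connected; first by left.
have P0_gt0_connect x y := walk_dist_gt0_connect eirr deg_gt0 (lexx (0 : R)) ler01 ltr01 (conn x y).
have P0_gt0_trans := walk_dist_gt0_trans (lexx (0 : R)) ler01.
pose s y := `[< exists2 l, ~~ odd l & 0 < P0 l x0 y >].
have parity l y : 0 < P0 l x0 y -> s y = ~~ odd l.
  move=> Pl; case: (boolP (odd l)) => ol; last by apply/asboolP; exists l.
  apply/negP => /asboolP[l' ol' Pl']; have [m Pm] := P0_gt0_connect y z0.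
  apply: no_even; have [om|om] := boolP (odd m).
    by exists (l + m)%N; rewrite ?oddD ?ol ?om //; apply: P0_gt0_trans Pl Pm.
  by exists (l' + m)%N; rewrite ?oddD ?(negbTE ol') ?(negbTE om) //; apply: P0_gt0_trans Pl' Pm.
right; exists s => x y exy; have [l Pl] := P0_gt0_connect x0 x.
have Pl1 : 0 < P0 (l + 1) x0 y.
  by apply: P0_gt0_trans Pl _; rewrite walk_dist1 trans_gt0.
by rewrite (parity _ _ Pl) (parity _ _ Pl1) addn1 /= negbK.
Qed.

(** * Bipartite graphs *)

Section Bipartition.
Variable s : V -> bool.
Hypothesis s_bip : bipartition s.

Lemma walk_dist0_parity k x y : s y != s x (+) odd k -> P0 k x y = 0.
Proof.
elim: k y => [|k IH] y /=.
  by rewrite addbF; case: (eqVneq y x) => [->|]; rewrite ?eqxx.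
move=> s_y; apply: big1 => z _.
have [s_z|/IH ->] := eqVneq (s z) (s x (+) odd k); last by rewrite mul0r.
rewrite /trans; case: eqP => _; first by rewrite mulr0.
case: (boolP (e z y)) => [ezy|_]; last by rewrite mulr0.
by rewrite (s_bip ezy) s_z addbN eqxx in s_y.
Qed.

Lemma same_side_even_walk x y : s x = s y -> exists2 l, ~~ odd l & 0 < P0 l x y.
Proof.
move=> sxy; have [l Pl] := walk_dist_gt0_connect eirr deg_gt0 (lexx (0 : R)) ler01 ltr01 (conn x y).
exists l => //; apply: contraTN Pl => ol.
by rewrite walk_dist0_parity ?ltxx // ol addbT sxy; case: (s y).
Qed.

Lemma sum_deg_side b :
  \sum_(x | s x == b) (deg e x)%:R = (\sum_x (deg e x)%:R) / 2 :> R.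
Proof.
have other_side : \sum_(x | ~~ (s x == b)) (deg e x)%:R = \sum_(x | s x == ~~ b) (deg e x)%:R :> R.
  by apply: eq_bigl => x; case: (s x); case: (b).
have edges b' : \sum_(x | s x == b') (deg e x)%:R =
    \sum_x \sum_y (if (s x == b') && e x y then 1 else 0) :> R.
  rewrite big_mkcond; apply: eq_bigr => x _; rewrite natr_deg.
  by case: (s x == b'); last by rewrite big1.
have halves : \sum_(x | s x == b) (deg e x)%:R = \sum_(x | s x == ~~ b) (deg e x)%:R :> R.
  rewrite !edges exchange_big; apply: eq_bigr => y _; apply: eq_bigr => x _.
  rewrite esym; case: (boolP (e y x)) => [eyx|_]; last by rewrite !andbF.
  by rewrite !andbT (s_bip eyx); case: (s y); case: (b).
by rewrite [X in _ = X / 2](bigID (fun x => s x == b)) /= other_side -halves; field.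
Qed.

Lemma bipartite_walk_cvg w x :
  P0 k w x - (s x == s w (+) odd k)%:R * (2 * stationary x) @[k --> \oo] --> 0.
Proof.
apply/cvgrPdistC_le => eps eps_gt0.
have mass k : s x = s w (+) odd k -> \sum_(y | s y == s x) P0 k w y = 1.
  move=> s_x; rewrite -(sum_walk_dist eirr deg_gt0 0 k w) [RHS](bigID (fun y => s y == s x)) /=.
  by rewrite [X in _ = _ + X]big1 ?addr0 // => y; rewrite s_x => /walk_dist0_parity.
have side_deg : (deg e x)%:R / \sum_(y | s y == s x) (deg e y)%:R = 2 * stationary x.
  by rewrite sum_deg_side /stationary; field; rewrite gt_eqF ?sum_deg_gt0.
have reach y : s y == s x -> exists2 l, (2 %| l)%N & 0 < P0 l y x.
  by move=> /eqP /same_side_even_walk[l ? ?]; exists l; rewrite ?dvdn2.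
have closed m y z : s y == s x -> s z != s x -> P0 (2 * m) y z = 0.
  by move=> /eqP sy nsz; apply: walk_dist0_parity; rewrite oddM /= addbF sy.
have := walk_dist_cvg_class esym eirr deg_gt0 (lexx 0) ler01 (c := fun y => s y == s x)
  (q := 2) erefl (eqxx _) (walk_dist2_gt0 esym eirr deg_gt0 (lexx 0) ler01 ltr01 x)
  reach closed w eps_gt0.
apply: filterS => k close.
have [s_x|ns_x] := eqVneq (s x) (s w (+) odd k).
  by rewrite mul1r -side_deg subr0; apply: close (mass _ s_x) _ (eqxx _).
by rewrite mul0r !subr0 walk_dist0_parity ?normr0 ?ltW.
Qed.

Lemma bipartite_walks_same_side_cvg u v x : s u = s v ->
  P0 k u x - P0 k v x @[k --> \oo] --> 0.
Proof.
move=> suv; pose L k := (s x == s u (+) odd k)%:R * (2 * stationary x).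
rewrite -[X in _ --> X](subr0 0) (@eq_cvg _ _ _ _ (fun k => (P0 k u x - L k) - (P0 k v x - L k))).
  by apply: cvgB; rewrite /L; [|rewrite suv]; apply: bipartite_walk_cvg.
by move=> k; rewrite opprB addrA subrK.
Qed.

Lemma sum_sign_walk_dist g v k :
  \sum_x (-1) ^+ s x * walk_dist e g v k x = (2 * g - 1) ^+ k * (-1) ^+ s v :> R.
Proof.
elim: k => [|k IH].
  by rewrite (bigD1 v) //= eqxx mulr1 big1 ?addr0 ?mul1r // => x /negbTE ->; rewrite mulr0.
have step x : \sum_y (-1) ^+ s y * trans e g x y = (2 * g - 1) * (-1) ^+ s x :> R.
  have term y : (-1) ^+ s y * trans e g x y = (if y == x then g * (-1) ^+ s x else 0) +
      - (-1) ^+ s x * (1 - g) / (deg e x)%:R * (if e x y then 1 else 0) :> R.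
    rewrite transE //; have [->|_] := eqVneq y x; first by rewrite eirr; ring.
    case: (boolP (e x y)) => [exy|_]; last by rewrite !(addr0, mulr0).
    by rewrite (s_bip exy) signrN; ring.
  under eq_bigr do rewrite term.
  rewrite big_split /= -big_mkcond /= big_pred1_eq -big_distrr /= -natr_deg.
  by field; rewrite natr_deg_neq0.
rewrite exprS -mulrA -IH big_distrr /=.
under eq_bigr do rewrite big_distrr /=.
rewrite exchange_big /=; apply: eq_bigr => x _.
rewrite [RHS]mulrA [RHS]mulrC -step big_distrr /=.
by apply: eq_bigr => y _; rewrite mulrCA.
Qed.

Lemma tv_walks_bipartite g u v k : 0 <= g -> g <= 1 ->
  (forall x, s x = s u (+) odd k -> walk_dist e g v k x <= P0 k u x) ->
  2^-1 * \sum_x `|P0 k u x - walk_dist e g v k x| = 2^-1 + 2^-1 * (1 - 2 * g) ^+ k \/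
  2^-1 * \sum_x `|P0 k u x - walk_dist e g v k x| = 2^-1 - 2^-1 * (1 - 2 * g) ^+ k.
Proof.
move=> g_ge0 g_le1 dominated.
have absE x : `|P0 k u x - walk_dist e g v k x| =
    P0 k u x - (-1) ^+ (s x (+) (s u (+) odd k)) * walk_dist e g v k x.
  have [s_x|ns_x] := eqVneq (s x) (s u (+) odd k).
    by rewrite s_x addbb mul1r ger0_norm ?subr_ge0 ?dominated.
  rewrite walk_dist0_parity // add0r normrN ger0_norm ?walk_dist_ge0 //.
  by move: ns_x; case: (s x); case: (s u (+) odd k) => //= _; rewrite sub0r mulN1r opprK.
under eq_bigr do rewrite absE.
rewrite sumrB sum_walk_dist //.
under eq_bigr do rewrite signr_addb -mulrA mulrCA.
rewrite -big_distrr /= sum_sign_walk_dist signr_addb signr_odd.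
have <- : (-1) ^+ k * (2 * g - 1) ^+ k = (1 - 2 * g) ^+ k :> R.
  by rewrite -exprMn mulN1r opprB.
by case: (s u); case: (s v); [right|left|left|right]; rewrite /= ?expr0 ?expr1; ring.
Qed.

Lemma lazy_walk_dominated g u v : 0 < g -> g < 1 ->
  \forall k \near \oo, forall x, s x = s u (+) odd k -> walk_dist e g v k x <= P0 k u x.
Proof.
move=> g_gt0 g_lt1; apply: filter_forall => x.
have lim : (P0 k u x - (s x == s u (+) odd k)%:R * (2 * stationary x)) - walk_dist e g v k x
    @[k --> \oo] --> 0 - stationary x.
  apply: cvgB; first exact: bipartite_walk_cvg.
  exact: walk_dist_cvg_stationary (ltW g_gt0) g_lt1 (or_introl g_gt0).
apply: filterS (cvgr_dist_lt _ _ lim _ (stationary_gt0 x)) => k + s_x.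
by rewrite s_x eqxx mul1r ltr_norml => /andP[_]; lra.
Qed.

Lemma nonlazy_walk_dominated u v k x : s u != s v ->
  s x = s u (+) odd k -> P0 k v x <= P0 k u x.
Proof.
move=> nsuv s_x; rewrite walk_dist0_parity ?walk_dist_ge0 // s_x.
by move: nsuv; case: (s u); case: (s v); case: (odd k).
Qed.

End Bipartition.

End ConnectedGraph.

Lemma wasserstein_walks_cvg0 (R : realType) (V : finType) (e : rel V) alpha beta u v :
  irreflexive e -> (forall x, (0 < deg e x)%N) ->
  0 <= alpha -> alpha <= 1 -> 0 <= beta -> beta <= 1 ->
  (forall x, walk_dist e alpha u k x - walk_dist e beta v k x @[k --> \oo] --> (0 : R)) ->
  wasserstein e (walk_dist e alpha u k) (walk_dist e beta v k) @[k --> \oo] --> 0.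
Proof.
move=> eirr deg_gt0 a_ge0 a_le1 b_ge0 b_le1; apply: wasserstein_cvg0 => k *.
- exact: walk_dist_ge0.
- exact: walk_dist_ge0.
- by rewrite !sum_walk_dist.
Qed.

Unset Implicit Arguments.
Theorem lemma5p6 (R : realType) (V : finType) (e : rel V) (u v : V)
  (alpha beta : R) :
  simple_connected_graph e ->
  0 <= alpha -> alpha <= beta -> beta <= 1 ->
  beta < 1 ->
  (fun k : nat => wasserstein e (walk_dist e alpha u k) (walk_dist e beta v k))
     @ \oo --> (2^-1 : R) ->
  exists N : nat, forall k : nat, (N <= k)%N ->
    let xi := fun w => walk_dist e alpha u k w - walk_dist e beta v k w in
    2^-1 * \sum_(w : V) `|xi w| = 2^-1 + 2^-1 * (1 - 2 * beta) ^+ k \/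
    2^-1 * \sum_(w : V) `|xi w| = 2^-1 - 2^-1 * (1 - 2 * beta) ^+ k.
Proof.
move=> [esym [eirr conn]] a_ge0 ab b_le1 b_lt1 W_cvg; have b_ge0 := le_trans a_ge0 ab.
have W_ncvg0 : ~ wasserstein e (walk_dist e alpha u k) (walk_dist e beta v k) @[k --> \oo] --> 0.
  by move=> /(norm_cvg_unique W_cvg) /eqP; rewrite invr_eq0 pnatr_eq0.
have [single|/existsNP[a /existsNP[b /eqP ab_neq]]] := pselect (forall a b : V, a = b).
  by case: W_ncvg0; under eq_fun do rewrite wasserstein_subsingleton //; exact: cvg_cst.
have deg_gt0 := connected_deg_gt0 conn ab_neq.
have diff_ncvg0 : ~ forall x, walk_dist e alpha u k x - walk_dist e beta v k x @[k --> \oo] --> 0.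
  by move=> /(wasserstein_walks_cvg0 eirr deg_gt0 a_ge0 (le_trans ab b_le1) b_ge0 b_le1).
have [lazy_or_even|/not_orP[/negP]] := pselect (0 < alpha \/ even_connected R e).
  case: diff_ncvg0 => x; rewrite -(subrr (stationary R e x)).
  apply: cvgB; apply: (walk_dist_cvg_stationary esym eirr deg_gt0 conn) => //.
  - exact: le_lt_trans b_lt1.
  - by case: lazy_or_even => [?|]; [left; apply: lt_le_trans ab|right].
rewrite -leNgt => a_le0 not_even.
have {a_ge0 a_le0}a0 : alpha = 0 by apply/eqP; rewrite eq_le a_le0.
subst alpha; have [/not_even[]|[s s_bip]] := even_connected_or_bipartition R eirr deg_gt0 conn.
suff [N _ dominated] : \forall k \near \oo, forall x,
    s x = s u (+) odd k -> walk_dist e beta v k x <= walk_dist e 0 u k x.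
  by exists N => k /dominated; apply: (tv_walks_bipartite eirr deg_gt0 s_bip).
have [b_gt0|b_le0] := ltrP 0 beta; first exact: (lazy_walk_dominated esym eirr deg_gt0 conn s_bip).
have {ab b_le0}b0 : beta = 0 by apply/eqP; rewrite eq_le b_le0.
subst beta; have [suv|nsuv] := eqVneq (s u) (s v).
  by case: diff_ncvg0 => x; apply: (bipartite_walks_same_side_cvg esym eirr deg_gt0 conn s_bip).
by apply: nearW => k x; apply: (nonlazy_walk_dominated R s_bip).
Qed.
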